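(* With $G$ as defined below, $G$ is steep at the relative boundary of $\mathcal{P}_{\rm s}$: for any $p_0\in\partial\mathcal{P}_{\rm s}$, any $p_1\in\mathcal{P}_{\rm s}$, and $p_t=(1-t)p_0+tp_1$, one has \[ \lim_{t\to+0}\frac{d}{dt}G(p_t)=-\infty , \] where for $t\in(0,1)$, $\frac{d}{dt}G(p_t)=\sum_{(x,y)\in\mathcal{E}}(p_1(x,y)-p_0(x,y))\log\frac{p_t(y|x)}{v_0(y|x)}$. In particular there exists $(x,y)\in\mathcal{E}$ with $p_0(x,y)=0$ and $p_t(y|x)\to0$ as $t\to+0$.
   Context: $\mathcal{X}$ is a finite set and $\mathcal{E}\subset\mathcal{X}^2$ is such that the directed graph $(\mathcal{X},\mathcal{E})$ is strongly connected (for every $(x,y)$ there is a directed path from $x$ to $y$). $\mathcal{W}(\mathcal{X},\mathcal{E})$ is the set of Markov kernels $w(y|x)$ on $\mathcal{X}$ ($w\ge0$, $\sum_y w(y|x)=1$) with $\{(x,y)\mid w(y|x)>0\}=\mathcal{E}$; fix $v_0\in\mathcal{W}(\mathcal{X},\mathcal{E})$. $\mathcal{P}_{\rm s}$ is the set of probability distributions $p$ on $\mathcal{X}^2$ that are stationary, i.e. $\sum_y p(x,y)=\sum_y p(y,x)$ for all $x$, and whose support equals $\mathcal{E}$; $\mathrm{cl}(\mathcal{P}_{\rm s})$ is its closure in $\mathbb{R}^{\mathcal{X}^2}$ (stationary distributions with support contained in $\mathcal{E}$) and $\partial\mathcal{P}_{\rm s}=\mathrm{cl}(\mathcal{P}_{\rm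 s})\setminus\mathcal{P}_{\rm s}$ (those whose support is a proper subset of $\mathcal{E}$). For $p\in\mathrm{cl}(\mathcal{P}_{\rm s})$, $\bar p(x)=\sum_y p(x,y)$, $p(y|x)=p(x,y)/\bar p(x)$ when $\bar p(x)>0$, and $G(p)=\sum_{(x,y)\in\mathcal{E}}p(x,y)\log\frac{p(x,y)}{v_0(y|x)}-\sum_{x}\bar p(x)\log\bar p(x)$ with $0\log0=0$. *)

From HB Require Import structures.
From mathcomp Require Import all_boot all_order all_algebra.
From mathcomp Require Import all_classical all_reals all_analysis.
Set Implicit Arguments. Unset Strict Implicit. Unset Printing Implicit Defensive.
Import Order.TTheory GRing.Theory Num.Theory.
Local Open Scope ring_scope.

(* Functions on X^2 are curried: p x y = p(x,y); a kernel w is stored as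
   w x y = w(y|x).  The edge set E is a finite set of pairs. *)

Section Defs.
Context {R : realType} {X : finType}.

Definition strongly_connected (E : {set X * X}) : Prop :=
  forall x y : X, connect [rel a b | (a, b) \in E] x y.

Definition markov_kernel_on (E : {set X * X}) (w : X -> X -> R) : Prop :=
  [/\ forall x y, 0 <= w x y,
      forall x, \sum_(y : X) w x y = 1
    & forall x y, (0 < w x y) = ((x, y) \in E)].

Definition is_prob2 (p : X -> X -> R) : Prop :=
  (forall x y, 0 <= p x y) /\ \sum_(x : X) \sum_(y : X) p x y = 1.

Definition stationary (p : X -> X -> R) : Prop :=
  forall x, \sum_(y : X) p x y = \sum_(y : X) p y x.

Definition in_Ps (E : {set X * X}) (p : X -> X -> R) : Prop :=
  [/\ is_prob2 p, stationary p & forall x y, (p x y != 0) = ((x, y) \in E)].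

Definition in_clPs (E : {set X * X}) (p : X -> X -> R) : Prop :=
  [/\ is_prob2 p, stationary p & forall x y, p x y != 0 -> (x, y) \in E].

Definition in_bdPs (E : {set X * X}) (p : X -> X -> R) : Prop :=
  in_clPs E p /\ ~ in_Ps E p.

Definition pbar (p : X -> X -> R) (x : X) : R := \sum_(y : X) p x y.

Definition pcond (p : X -> X -> R) (x y : X) : R := p x y / pbar p x.

Definition xlnx_ (a b : R) : R := if a == 0 then 0 else a * ln (a / b).

Definition Gfun (E : {set X * X}) (v0 : X -> X -> R) (p : X -> X -> R) : R :=
  \sum_(e in E) xlnx_ (p e.1 e.2) (v0 e.1 e.2)
  - \sum_(x : X) xlnx_ (pbar p x) 1.

Definition segment (p0 p1 : X -> X -> R) (t : R) : X -> X -> R :=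
  fun x y => (1 - t) * p0 x y + t * p1 x y.

End Defs.

From HB Require Import structures.
From mathcomp Require Import all_boot all_order all_algebra.
From mathcomp Require Import all_classical all_reals all_analysis.
From mathcomp Require Import ring lra.
Import Order.TTheory GRing.Theory Num.Theory.
Import numFieldNormedType.Exports.
Local Open Scope ring_scope.
Local Open Scope classical_set_scope.

(* Differentiating G along the segment, the marginal terms cancel against the
   edge terms and leave sum_e (p1 - p0)(e) log(p_t(y|x) / v0(y|x)).
   Because p0 is stationary, its marginal is also its in-marginal, so it is
   positive at the head of every edge of positive p0-mass leaving a point where
   it is positive.  If no edge of E leaving such a point had p0-mass zero,
   strong connectivity would make the marginal positive everywhere and p0
   would lie in P_s.  Hence some edge (x, y) has p0(x, y) = 0 < pbar p0(x); along it
   p_t(y|x) = t p1(x, y) / pbar p_t(x) = O(t), so its term behaves like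
   p1(x, y) log t -> -oo, while every other term stays bounded above, as
   p_t(y|x) <= 1, and p_t(y|x) >= p0(x, y) / 2 for small t when p0(x, y) > 0. *)

Section Calculus.
Context {R : realType}.

Lemma ler_term_sum {I : finType} (f : I -> R) i :
  (forall j, 0 <= f j) -> f i <= \sum_j f j.
Proof. by move=> f0; rewrite (bigD1 i) //= lerDl sumr_ge0. Qed.

Lemma is_derive_affine (a b t : R) : is_derive t 1 (fun s : R => a + b * s) b.
Proof.
have -> : (fun s : R => a + b * s) = cst a + b \*: id by apply/funext.
apply: is_derive_eq (is_deriveD (is_derive_cst a t 1)
  (is_deriveZ b (is_derive_id t 1))) _.
by rewrite add0r /GRing.scale /= mulr1.
Qed.

Lemma is_derive_xlnx_affine (a b c t : R) : 0 < c -> 0 < a + b * t ->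
  is_derive t 1 (fun s : R => xlnx_ (a + b * s) c)
    (b * (ln ((a + b * t) / c) + 1)).
Proof.
move=> c_gt0 ut_gt0; pose u s := a + b * s; pose w s := u s / c.
have du : is_derive t 1 u b by exact: is_derive_affine.
have dw : is_derive t 1 w (b / c).
  have -> : w = fun s => a / c + b / c * s.
    by apply/funext => s; rewrite /w /u mulrDl mulrAC.
  exact: is_derive_affine.
have dln : is_derive (w t) 1 (@ln R) (w t)^-1.
  by apply: is_derive1_ln; rewrite divr_gt0.
have u_near_gt0 : \forall s \near t, 0 < u s.
  have u_cont : {for t, continuous u}.
    by apply: differentiable_continuous; apply/derivable1_diffP; exact: ex_derive.
  exact: (cvgr_gt _ u_cont _ ut_gt0).
have duw := is_deriveM du (is_derive1_comp dln dw).
apply: near_eq_is_derive (is_derive_eq duw _).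
  by near=> s; rewrite /xlnx_ gt_eqF //; near: s.
rewrite /w /u /comp /GRing.scale /=; field.
by rewrite !gt_eqF.
Unshelve. all: by end_near.
Qed.

Lemma is_derive_bigsum (I : finType) (P : pred I) (h : I -> R -> R)
    (dh : I -> R) (t : R) :
  (forall i, P i -> is_derive t 1 (h i) (dh i)) ->
  is_derive t 1 (fun s => \sum_(i | P i) h i s) (\sum_(i | P i) dh i).
Proof.
move=> dhi; rewrite -fct_sumE.
apply: (big_ind2 (fun f d => is_derive t 1 f d)) => //.
- exact: is_derive_cst.
- by move=> f1 d1 f2 d2; apply: is_deriveD.
Qed.

Lemma mul_le_norm_bounds (d L lo hi : R) :
  L <= hi -> (0 <= d \/ lo <= L) -> d * L <= `|d| * (`|lo| + `|hi|).
Proof.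
move=> Lhi [d_ge0|loL].
  apply: le_trans (ler_wpM2l d_ge0 Lhi) _.
  by rewrite ger0_norm // ler_wpM2l // ler_wpDl // ler_norm.
apply: le_trans (ler_norm _) _; rewrite normrM ler_wpM2l // ler_norml.
have := normr_ge0 lo; have := normr_ge0 hi.
have := ler_norm hi; have := ler_norm (- lo); rewrite normrN.
by move=> *; apply/andP; split; lra.
Qed.

End Calculus.

Section Support.
Context {R : realType} {X : finType}.
Implicit Types (E : {set X * X}) (p : X -> X -> R).

Lemma is_prob2_support {p} : is_prob2 p -> exists x y, p x y != 0.
Proof.
case=> _ p_sum; case: (pickP [pred e : X * X | p e.1 e.2 != 0]).
  by move=> [x y] pxy; exists x, y.
move=> p0; suff : \sum_x \sum_y p x y = 0.
  by rewrite p_sum => /eqP; rewrite oner_eq0.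
by apply: big1 => x _; apply: big1 => y _; apply/eqP/negbFE/(p0 (x, y)).
Qed.

Lemma strongly_connected_out_edge {E} :
  strongly_connected E -> (exists e, e \in E) -> forall x, exists y, (x, y) \in E.
Proof.
move=> sc [[a b] abE] x; have /connectP[[|c s] /= path_xa a_last] := sc x a.
  by exists b; rewrite -a_last.
by case/andP: path_xa => xcE _; exists c.
Qed.

Lemma stationary_pbar_gt0 {p} x {y} : (forall x y, 0 <= p x y) -> stationary p ->
  0 < p x y -> 0 < pbar p y.
Proof.
move=> p_ge0 p_st pxy_gt0; rewrite /pbar p_st.
apply: lt_le_trans pxy_gt0 _; exact: (ler_term_sum (fun z => p z y)).
Qed.

Lemma is_prob2_pbar_gt0 {p} : is_prob2 p -> exists x, 0 < pbar p x.
Proof.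
move=> pp; have [x [y pxy]] := is_prob2_support pp; have [p_ge0 _] := pp.
exists x; apply: lt_le_trans (ler_term_sum _ y (p_ge0 x)).
by rewrite lt0r pxy p_ge0.
Qed.

Lemma bdPs_null_edge {E p} : strongly_connected E -> in_bdPs E p ->
  exists2 e, e \in E & p e.1 e.2 = 0 /\ 0 < pbar p e.1.
Proof.
move=> sc [[pp p_st p_supp] not_Ps]; have [p_ge0 _] := pp.
case: (pickP [pred e : X * X | [&& e \in E, p e.1 e.2 == 0 & 0 < pbar p e.1]]).
  by move=> e /and3P[eE /eqP pe pbe]; exists e.
move=> no_null_edge; exfalso; apply: not_Ps.
have edge_gt0 x y : (x, y) \in E -> 0 < pbar p x -> 0 < p x y.
  move=> xyE pbx; rewrite lt0r p_ge0 andbT.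
  by apply: contraFN (no_null_edge (x, y)) => /= ->; rewrite xyE pbx.
have pbar_gt0 x : 0 < pbar p x.
  have [x0 pbx0] := is_prob2_pbar_gt0 pp.
  have /connectP[s path_s ->] := sc x0 x.
  elim: s x0 pbx0 path_s => [|z s IHs] w pbw //= /andP[wzE path_s].
  apply: IHs path_s; apply: (stationary_pbar_gt0 w) => //.
  exact: edge_gt0 wzE pbw.
split=> // x y; apply/idP/idP; first exact: p_supp.
by move=> xyE; rewrite gt_eqF // edge_gt0.
Qed.

End Support.

Definition segment_slope {R : realType} {X : finType} (E : {set X * X})
    (v0 p0 p1 : X -> X -> R) (t : R) : R :=
  \sum_(e in E) (p1 e.1 e.2 - p0 e.1 e.2) *
    ln (pcond (segment p0 p1 t) e.1 e.2 / v0 e.1 e.2).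

Section Segment.
Context {R : realType} {X : finType}.
Context {E : {set X * X}} {v0 p0 p1 : X -> X -> R}.

Lemma segmentE s x y : segment p0 p1 s x y = p0 x y + (p1 x y - p0 x y) * s.
Proof. by rewrite /segment; ring. Qed.

Lemma pbar_segment s x :
  pbar (segment p0 p1 s) x = pbar p0 x + (pbar p1 x - pbar p0 x) * s.
Proof. by rewrite /pbar /segment big_split /= -!mulr_sumr; ring. Qed.

Hypothesis p0_ge0 : forall x y, 0 <= p0 x y.
Hypothesis p1_ge0 : forall x y, 0 <= p1 x y.
Hypothesis p1_gt0 : forall x y, (x, y) \in E -> 0 < p1 x y.
Hypothesis E_out : forall x, exists y, (x, y) \in E.
Hypothesis v0_gt0 : forall x y, (x, y) \in E -> 0 < v0 x y.

Lemma segment_ge0 {s x y} : 0 <= s <= 1 -> 0 <= segment p0 p1 s x y.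
Proof.
by case/andP=> s_ge0 s_le1; rewrite addr_ge0 ?mulr_ge0 ?subr_ge0.
Qed.

Lemma segment_gt0 {s x y} : 0 < s <= 1 -> (x, y) \in E ->
  0 < segment p0 p1 s x y.
Proof.
case/andP=> s_gt0 s_le1 xyE; apply: ltr_wpDl; first by rewrite mulr_ge0 ?subr_ge0.
by rewrite mulr_gt0 ?p1_gt0.
Qed.

Lemma pbar_segment_gt0 {s x} : 0 < s <= 1 -> 0 < pbar (segment p0 p1 s) x.
Proof.
move=> s01; have [y xyE] := E_out x.
apply: lt_le_trans (segment_gt0 s01 xyE) _; apply: ler_term_sum => z.
by apply: segment_ge0; case/andP: s01 => /ltW -> ->.
Qed.

Lemma pcond_segment_gt0 {s x y} : 0 < s <= 1 -> (x, y) \in E ->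
  0 < pcond (segment p0 p1 s) x y.
Proof. by move=> s01 xyE; rewrite divr_gt0 ?segment_gt0 ?pbar_segment_gt0. Qed.

Lemma pcond_segment_le1 {s x y} : 0 < s <= 1 -> pcond (segment p0 p1 s) x y <= 1.
Proof.
move=> s01; rewrite /pcond ler_pdivrMr ?pbar_segment_gt0 // mul1r.
apply: ler_term_sum => z.
by apply: segment_ge0; case/andP: s01 => /ltW -> ->.
Qed.

Hypothesis p0_supp : forall x y, p0 x y != 0 -> (x, y) \in E.
Hypothesis p1_supp : forall x y, p1 x y != 0 -> (x, y) \in E.

Lemma sum_pbar_diff (f : X -> R) :
  \sum_x (pbar p1 x - pbar p0 x) * f x =
  \sum_(e in E) (p1 e.1 e.2 - p0 e.1 e.2) * f e.1.
Proof.
have out0 p x y : (forall x y, p x y != 0 -> (x, y) \in E) ->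
    (x, y) \notin E -> p x y = 0.
  by move=> p_supp; apply: contraNeq => /p_supp.
transitivity (\sum_(e : X * X) (p1 e.1 e.2 - p0 e.1 e.2) * f e.1).
  rewrite -(pair_bigA _ (fun x y => (p1 x y - p0 x y) * f x)).
  by apply: eq_bigr => x _; rewrite /pbar -sumrB mulr_suml.
rewrite [RHS]big_mkcond; apply: eq_bigr => -[x y] _ /=.
by case: ifP => // /negbT xyE; rewrite !out0 // subrr mul0r.
Qed.

Lemma is_derive_Gfun_segment (t : R) : 0 < t <= 1 -> is_derive t 1
  (fun s => Gfun E v0 (segment p0 p1 s)) (segment_slope E v0 p0 p1 t).
Proof.
move=> t01.
pose F1 s := \sum_(e in E)
  xlnx_ (p0 e.1 e.2 + (p1 e.1 e.2 - p0 e.1 e.2) * s) (v0 e.1 e.2).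
pose F2 s := \sum_x xlnx_ (pbar p0 x + (pbar p1 x - pbar p0 x) * s) 1.
have -> : (fun s => Gfun E v0 (segment p0 p1 s)) = F1 - F2.
  apply/funext => s; rewrite /Gfun /F1 /F2 /=.
  by congr (_ - _); apply: eq_bigr => *; rewrite ?segmentE ?pbar_segment.
have dF1 : is_derive t 1 F1 (\sum_(e in E) (p1 e.1 e.2 - p0 e.1 e.2) *
    (ln ((p0 e.1 e.2 + (p1 e.1 e.2 - p0 e.1 e.2) * t) / v0 e.1 e.2) + 1)).
  apply: is_derive_bigsum => -[x y] xyE /=.
  by apply: is_derive_xlnx_affine; rewrite ?v0_gt0 // -segmentE segment_gt0.
have dF2 : is_derive t 1 F2 (\sum_x (pbar p1 x - pbar p0 x) *
    (ln ((pbar p0 x + (pbar p1 x - pbar p0 x) * t) / 1) + 1)).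
  apply: is_derive_bigsum => x _.
  by apply: is_derive_xlnx_affine; rewrite // -pbar_segment pbar_segment_gt0.
apply: is_derive_eq (is_deriveB dF1 dF2) _.
rewrite sum_pbar_diff /segment_slope -sumrB; apply: eq_bigr => -[x y] xyE /=.
rewrite -segmentE -pbar_segment divr1 /pcond.
rewrite !ln_div ?posrE ?divr_gt0 ?segment_gt0 ?pbar_segment_gt0 ?v0_gt0 //.
ring.
Qed.

Hypothesis p0_sum : \sum_x \sum_y p0 x y = 1.
Hypothesis p1_sum : \sum_x \sum_y p1 x y = 1.

Lemma pbar_segment_le1 {s x} : 0 <= s <= 1 -> pbar (segment p0 p1 s) x <= 1.
Proof.
move=> s01; have pbar_sum p : \sum_x pbar p x = \sum_x \sum_y p x y by [].
apply: le_trans (ler_term_sum _ x _) _ => [z|].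
  by apply: sumr_ge0 => y _; apply: segment_ge0.
under eq_bigr do rewrite pbar_segment.
by rewrite big_split /= -mulr_suml sumrB !pbar_sum p0_sum p1_sum subrr mul0r addr0.
Qed.

Lemma pcond_segment_ge_half {t x y} : 0 < t <= 1 / 2 ->
  p0 x y / 2 <= pcond (segment p0 p1 t) x y.
Proof.
case/andP=> t_gt0 t_le; have t01 : 0 < t <= 1 by rewrite t_gt0; lra.
rewrite /pcond ler_pdivlMr ?pbar_segment_gt0 // segmentE.
have := @pbar_segment_le1 t x; rewrite (ltW t_gt0) /= => /(_ ltac:(lra)).
by have := p0_ge0 x y; have := p1_ge0 x y; nra.
Qed.

Lemma segment_slope_term_le {t x y} : (x, y) \in E -> 0 < t <= 1 / 2 ->
  (p1 x y - p0 x y) * ln (pcond (segment p0 p1 t) x y / v0 x y) <=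
  `|p1 x y - p0 x y| * (`|ln (p0 x y / (2 * v0 x y))| + `|ln (1 / v0 x y)|).
Proof.
move=> xyE t_half; have t01 : 0 < t <= 1 by case/andP: t_half => -> /=; lra.
have v_gt0 := v0_gt0 _ _ xyE.
have ratio_gt0 : 0 < pcond (segment p0 p1 t) x y / v0 x y.
  by rewrite divr_gt0 ?pcond_segment_gt0.
have inv_gt0 : 0 < 1 / v0 x y by rewrite divr_gt0.
apply: mul_le_norm_bounds.
  rewrite ler_ln ?posrE // ler_pM2r ?invr_gt0 //.
  exact: pcond_segment_le1.
(* If p0 x y = 0 the lower bound is the junk value ln 0 = 0; then the
   coefficient p1 x y - p0 x y is nonnegative instead. *)
have [->|p0_neq0] := eqVneq (p0 x y) 0; first by left; rewrite subr0.
right; have p0_gt0 : 0 < p0 x y / 2 / v0 x y.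
  by rewrite !divr_gt0 // lt0r p0_neq0 p0_ge0.
rewrite invfM mulrA ler_ln ?posrE //.
by rewrite ler_pM2r ?invr_gt0 ?pcond_segment_ge_half.
Qed.

Section NullEdge.
Context {xs ys : X}.
Hypothesis xsys_in_E : (xs, ys) \in E.
Hypothesis p0_xsys : p0 xs ys = 0.
Hypothesis pbar0_xs : 0 < pbar p0 xs.

(* p_t(ys|xs) = t p1(xs, ys) / pbar p_t(xs), with pbar p_t(xs) >= pbar p0(xs) / 2. *)
Lemma pcond_segment_le_linear {t} : 0 < t <= 1 / 2 ->
  pcond (segment p0 p1 t) xs ys <= 2 * p1 xs ys / pbar p0 xs * t.
Proof.
case/andP=> t_gt0 t_le; have t01 : 0 < t <= 1 by rewrite t_gt0; lra.
have pbar1_ge0 : 0 <= pbar p1 xs by apply: sumr_ge0.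
have pbar_ge : pbar p0 xs / 2 <= pbar (segment p0 p1 t) xs.
  have : 0 <= pbar p0 xs * (1 / 2 - t) by rewrite mulr_ge0 ?subr_ge0 // ltW.
  by rewrite pbar_segment; nra.
rewrite /pcond segmentE p0_xsys subr0 add0r ler_pdivrMr ?pbar_segment_gt0 //.
have k_ge0 : 0 <= 2 * p1 xs ys / pbar p0 xs * t.
  by rewrite !mulr_ge0 ?invr_ge0 ?p1_ge0 // ltW.
have -> : p1 xs ys * t = 2 * p1 xs ys / pbar p0 xs * t * (pbar p0 xs / 2).
  by field; rewrite gt_eqF.
exact: ler_wpM2l pbar_ge.
Qed.

Lemma pcond_segment_cvg0 : pcond (segment p0 p1 t) xs ys @[t --> 0^'+] --> 0.
Proof.
pose k := 2 * p1 xs ys / pbar p0 xs.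
apply: (@squeeze_cvgr _ _ _ _ (cst 0) ( *%R k)); last 2 first.
- exact: cvg_cst.
- apply: cvg_at_right_filter; rewrite -[X in _ --> X](mulr0 k).
  exact: mulrl_continuous.
near=> t; have t_half : 0 < t <= 1 / 2.
  by apply/andP; split; near: t; [exact: nbhs_right_gt | apply: nbhs_right_le; lra].
rewrite ltW ?pcond_segment_gt0 //=; last by case/andP: t_half => -> /=; lra.
exact: pcond_segment_le_linear.
Unshelve. all: by end_near.
Qed.

Lemma segment_slope_cvgNy : segment_slope E v0 p0 p1 t @[t --> 0^'+] --> -oo.
Proof.
apply/cvgrNyPle => A.
pose K := \sum_(e in E | e != (xs, ys)) `|p1 e.1 e.2 - p0 e.1 e.2| *
  (`|ln (p0 e.1 e.2 / (2 * v0 e.1 e.2))| + `|ln (1 / v0 e.1 e.2)|).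
pose c := 2 * p1 xs ys / pbar p0 xs / v0 xs ys.
pose M := (A - K) / p1 xs ys.
have p1_xsys := p1_gt0 _ _ xsys_in_E; have v_gt0 := v0_gt0 _ _ xsys_in_E.
have c_gt0 : 0 < c by rewrite !divr_gt0 ?mulr_gt0.
near=> t.
have t_half : 0 < t <= 1 / 2.
  by apply/andP; split; near: t; [exact: nbhs_right_gt | apply: nbhs_right_le; lra].
have t01 : 0 < t <= 1 by case/andP: t_half => -> /=; lra.
have t_le : t <= expR M / c.
  by near: t; apply: nbhs_right_le; rewrite divr_gt0 ?expR_gt0.
have log_le : ln (pcond (segment p0 p1 t) xs ys / v0 xs ys) <= M.
  have ct_gt0 : 0 < c * t by rewrite mulr_gt0 //; case/andP: t01.
  have ratio_gt0 : 0 < pcond (segment p0 p1 t) xs ys / v0 xs ys.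
    by rewrite divr_gt0 ?pcond_segment_gt0.
  apply: (@le_trans _ _ (ln (c * t))).
    rewrite ler_ln ?posrE // /c [leRHS]mulrAC.
    by rewrite ler_pM2r ?invr_gt0 ?pcond_segment_le_linear.
  by rewrite -[M]expRK ler_ln ?posrE ?expR_gt0 // mulrC -ler_pdivlMr.
have other_le : \sum_(e in E | e != (xs, ys)) (p1 e.1 e.2 - p0 e.1 e.2) *
    ln (pcond (segment p0 p1 t) e.1 e.2 / v0 e.1 e.2) <= K.
  by apply: ler_sum => -[x y] /andP[xyE _]; apply: segment_slope_term_le.
have -> : A = p1 xs ys * M + K by rewrite /M mulrCA divff ?gt_eqF // mulr1 subrK.
rewrite /segment_slope (bigD1 (xs, ys)) //= p0_xsys subr0 lerD // ler_pM2l //.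
Unshelve. all: by end_near.
Qed.

End NullEdge.

End Segment.

Theorem mainTheorem6 (R : realType) (X : finType) (E : {set X * X})
  (v0 : X -> X -> R) (p0 p1 : X -> X -> R) :
  strongly_connected E ->
  markov_kernel_on E v0 ->
  in_bdPs E p0 ->
  in_Ps E p1 ->
  (forall t : R, 0 < t < 1 ->
     derivable (fun s : R => Gfun E v0 (segment p0 p1 s)) t 1 /\
     (fun s : R => Gfun E v0 (segment p0 p1 s))^`() t =
       \sum_(e in E) (p1 e.1 e.2 - p0 e.1 e.2) *
           ln (pcond (segment p0 p1 t) e.1 e.2 / v0 e.1 e.2)) /\
  ((fun s : R => Gfun E v0 (segment p0 p1 s))^`() t @[t --> 0^'+] --> -oo) /\
  (exists2 e, e \in E &
     p0 e.1 e.2 = 0 /\ pcond (segment p0 p1 t) e.1 e.2 @[t --> 0^'+] --> 0).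
Proof.
move=> sc [_ _ v0_supp] p0_bd [p1_prob _ p1_supp_eq].
have [[[p0_ge0 p0_sum] _ p0_supp] _] := p0_bd; have [p1_ge0 p1_sum] := p1_prob.
have p1_gt0 x y : (x, y) \in E -> 0 < p1 x y.
  by rewrite -p1_supp_eq lt0r p1_ge0 andbT.
have v0_gt0 x y : (x, y) \in E -> 0 < v0 x y by rewrite v0_supp.
have p1_supp x y : p1 x y != 0 -> (x, y) \in E by rewrite p1_supp_eq.
have E_out : forall x, exists y, (x, y) \in E.
  apply: strongly_connected_out_edge sc _.
  have [x [y pxy]] := is_prob2_support p1_prob.
  by exists (x, y); rewrite -p1_supp_eq.
have dG (t : R) : 0 < t < 1 -> is_derive t 1
    (fun s => Gfun E v0 (segment p0 p1 s)) (segment_slope E v0 p0 p1 t).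
  case/andP=> t_gt0 /ltW t_le1.
  by apply: is_derive_Gfun_segment => //; rewrite t_gt0.
have [[xs ys] xsysE [p0_xsys pbar0_xs]] := bdPs_null_edge sc p0_bd.
split; [|split].
- by move=> t /dG dGt; split; [exact: ex_derive | rewrite derive1E derive_val].
- have slope_cvg := segment_slope_cvgNy p0_ge0 p1_ge0 p1_gt0 E_out v0_gt0
    p0_sum p1_sum xsysE p0_xsys pbar0_xs.
  apply: cvg_trans slope_cvg; apply: near_eq_cvg; near=> t.
  have /dG dGt : 0 < t < 1.
    by apply/andP; split; near: t; [exact: nbhs_right_gt | exact: nbhs_right_lt].
  by rewrite derive1E derive_val.
- exists (xs, ys) => //; split => //=.
  exact: (pcond_segment_cvg0 p0_ge0 p1_ge0 p1_gt0 E_out xsysE p0_xsys pbar0_xs).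
Unshelve. all: by end_near.
Qed.
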